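(* Let $B(\mathbf f,\tilde{\mathbf f})=P(\mathbf f\cdot\nabla\tilde{\mathbf f}+\tilde{\mathbf f}\cdot\nabla\mathbf f)$ for smooth divergence-free mean-free fields on $\mathbf T^3$. Then: (i) for every $\mathbf k\in\mathbf Z^3\setminus\{0\}$, $B(\mathbf e,\tilde{\mathbf e})=0$ for all $\mathbf e,\tilde{\mathbf e}\in F_{\mathbf k}$; (ii) for all $\mathbf j,\mathbf k\in\mathbf Z^3\setminus\{0\}$, $\operatorname{span}\{B(\mathbf e,\tilde{\mathbf e}):\mathbf e\in F_{\mathbf j},\tilde{\mathbf e}\in F_{\mathbf k}\}\subseteq\operatorname{span}(F_{\mathbf j-\mathbf k}\cup F_{\mathbf j+\mathbf k})$, with equality whenever $\mathbf j,\mathbf k$ are linearly independent and $|\mathbf j|\ne|\mathbf k|$; (iii) $F_{(1,1,1)}\subseteq\operatorname{span}\{B(B(\mathbf e,\tilde{\mathbf e}),\tilde{\tilde{\mathbf e}}):\mathbf e,\tilde{\mathbf e},\tilde{\tilde{\mathbf e}}\in F_{(1,0,0)}\cup F_{(0,1,0)}\cup F_{(0,0,1)}\}$.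
   Context: $P$ is the Leray projection onto mean-free divergence-free vector fields on $\mathbf T^3$. For each $\mathbf k\in\mathbf Z^3\setminus\{0\}$ choose $\mathbf a^{(0)}_{\mathbf k},\mathbf a^{(1)}_{\mathbf k}\in\mathbb R^3$ with $\mathbf a^{(0)}_{\mathbf k}\cdot\mathbf k=\mathbf a^{(1)}_{\mathbf k}\cdot\mathbf k=\mathbf a^{(0)}_{\mathbf k}\cdot\mathbf a^{(1)}_{\mathbf k}=0$ and $|\mathbf a^{(0)}_{\mathbf k}|^2=|\mathbf a^{(1)}_{\mathbf k}|^2=1/(4\pi)$; set $\mathbf e_{\mathbf k,l,0}=2\mathbf a^{(l)}_{\mathbf k}\cos(\mathbf k\cdot x)$, $\mathbf e_{\mathbf k,l,1}=2\mathbf a^{(l)}_{\mathbf k}\sin(\mathbf k\cdot x)$ and $F_{\mathbf k}=\operatorname{span}\{\mathbf e_{\mathbf k,l,m}:l,m\in\{0,1\}\}$ (so $F_{\mathbf k}$ is the space of divergence-free fields $\mathbf A\cos(\mathbf k\cdot x)+\mathbf B\sin(\mathbf k\cdot x)$ with $\mathbf A,\mathbf B\perp\mathbf k$, and $F_{-\mathbf k}=F_{\mathbf k}$). By convention $F_{\mathbf 0}=\{0\}$. *)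

From Stdlib Require Import Reals ZArith List ClassicalEpsilon.
Open Scope R_scope.

Record V3 := mkV3 { v1 : R; v2 : R; v3 : R }.

Definition vzero : V3 := mkV3 0 0 0.
Definition vadd (a b : V3) : V3 := mkV3 (v1 a + v1 b) (v2 a + v2 b) (v3 a + v3 b).
Definition vscale (c : R) (a : V3) : V3 := mkV3 (c * v1 a) (c * v2 a) (c * v3 a).
Definition vdot (a b : V3) : R := v1 a * v1 b + v2 a * v2 b + v3 a * v3 b.
Definition vnorm (a : V3) : R := sqrt (vdot a a).
Definition ev1 : V3 := mkV3 1 0 0.
Definition ev2 : V3 := mkV3 0 1 0.
Definition ev3 : V3 := mkV3 0 0 1.

Record Z3 := mkZ3 { z1 : Z; z2 : Z; z3 : Z }.
Definition zzero : Z3 := mkZ3 0 0 0.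
Definition zadd (j k : Z3) : Z3 := mkZ3 (z1 j + z1 k) (z2 j + z2 k) (z3 j + z3 k).
Definition zsub (j k : Z3) : Z3 := mkZ3 (z1 j - z1 k) (z2 j - z2 k) (z3 j - z3 k).
Definition zeqb (j k : Z3) : bool :=
  (Z.eqb (z1 j) (z1 k) && Z.eqb (z2 j) (z2 k) && Z.eqb (z3 j) (z3 k))%bool.
Definition zR (k : Z3) : V3 := mkV3 (IZR (z1 k)) (IZR (z2 k)) (IZR (z3 k)).

(** Vector fields on T^3, viewed as (2pi-periodic) maps R^3 -> R^3 *)
Definition Field := V3 -> V3.
Definition fzero : Field := fun _ => vzero.
Definition fadd (f g : Field) : Field := fun x => vadd (f x) (g x).
Definition fscale (c : R) (f : Field) : Field := fun x => vscale c (f x).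

Definition mode (k : Z3) (A B : V3) : Field :=
  fun x => vadd (vscale (cos (vdot (zR k) x)) A) (vscale (sin (vdot (zR k) x)) B).

Fixpoint eval_rep (l : list (Z3 * V3 * V3)) : Field :=
  match l with
  | nil => fzero
  | (k, A, B) :: l' => fadd (mode k A B) (eval_rep l')
  end.

(** Fourier symbol of the Leray projection: projection onto k^perp for k <> 0,
    and 0 on the mean (k = 0). *)
Definition leray_symbol (k : Z3) (v : V3) : V3 :=
  if zeqb k zzero then vzero
  else vadd v (vscale (- (vdot v (zR k) / vdot (zR k) (zR k))) (zR k)).

Definition proj_rep (l : list (Z3 * V3 * V3)) : list (Z3 * V3 * V3) :=
  map (fun t => match t with (k, A, B) => (k, leray_symbol k A, leray_symbol k B) end) l.

(** Leray projection P (on trigonometric-polynomial fields, which contain every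
    field to which it is applied in the statement): the Fourier multiplier
    above.  Defined by choice; independent of the representation by uniqueness
    of Fourier coefficients. *)
Definition Leray (f : Field) : Field :=
  epsilon (inhabits fzero)
    (fun g => exists l, f = eval_rep l /\ g = eval_rep (proj_rep l)).

Definition deriv1 (h : R -> R) (t : R) : R :=
  epsilon (inhabits 0) (fun l => derivable_pt_lim h t l).

Definition pderiv (g : Field) (d : V3) : Field :=
  fun x => mkV3 (deriv1 (fun t => v1 (g (vadd x (vscale t d)))) 0)
                (deriv1 (fun t => v2 (g (vadd x (vscale t d)))) 0)
                (deriv1 (fun t => v3 (g (vadd x (vscale t d)))) 0).

Definition advect (f g : Field) : Field :=
  fun x => vadd (vscale (v1 (f x)) (pderiv g ev1 x))
             (vadd (vscale (v2 (f x)) (pderiv g ev2 x))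
                   (vscale (v3 (f x)) (pderiv g ev3 x))).

Definition Bop (f g : Field) : Field := Leray (fadd (advect f g) (advect g f)).

(** F_k = { A cos(k.x) + B sin(k.x) : A, B perpendicular to k },  F_0 = {0}.
    (= span of the e_{k,l,m} of the paper, for any admissible choice of a_k^(l).) *)
Definition Fk (k : Z3) (f : Field) : Prop :=
  if zeqb k zzero then f = fzero
  else exists A B : V3, vdot A (zR k) = 0 /\ vdot B (zR k) = 0 /\ f = mode k A B.

Inductive span (S : Field -> Prop) : Field -> Prop :=
| span_zero : span S fzero
| span_cons : forall (c : R) (g h : Field), S g -> span S h -> span S (fadd (fscale c g) h).

Definition subset (S T : Field -> Prop) : Prop := forall f, S f -> T f.
Definition set_union (S T : Field -> Prop) : Field -> Prop := fun f => S f \/ T f.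

Definition Bset (j k : Z3) : Field -> Prop :=
  fun f => exists e e', Fk j e /\ Fk k e' /\ f = Bop e e'.

Definition lin_indep2 (j k : Z3) : Prop :=
  forall a b : R, vadd (vscale a (zR j)) (vscale b (zR k)) = vzero -> a = 0 /\ b = 0.

Definition Fcoord (f : Field) : Prop :=
  Fk (mkZ3 1 0 0) f \/ Fk (mkZ3 0 1 0) f \/ Fk (mkZ3 0 0 1) f.

Definition BBset : Field -> Prop :=
  fun f => exists e e' e'', Fcoord e /\ Fcoord e' /\ Fcoord e'' /\ f = Bop (Bop e e') e''.

(** Every field in the statement is a trigonometric polynomial, given by a finite list of
    modes [A cos(k.x) + B sin(k.x)]; differentiation and multiplication by a coordinate act
    explicitly on such lists.  The Leray projection acts on them mode by mode, consistently,
    because a trigonometric polynomial vanishes only if its part at each pair of frequencies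
    [{k, -k}] does: induct on the number of modes, using a second difference
    [f(x + s v) + f(x - s v) - 2 cos(s k0.v) f(x)] that kills the [{k0, -k0}]-part and
    multiplies every other part by a nonzero factor.

    Hence [B] of a mode at [j] and a mode at [k] is a mode at [j + k] plus a mode at [j - k],
    with explicit coefficients.  For [j = k] these vanish by orthogonality, which gives (i), and
    in general they give the inclusion in (ii).  Conversely, suitable combinations of values of
    [B] are single modes with coefficient [P_(j+-k)((a.k) b +- (b.j) a)], [a] in [j^perp],
    [b] in [k^perp]; when [j, k] are independent and [|j| <> |k|], these coefficients reach the
    orthogonal basis [n = j x k], [P_(j+-k)((j -+ k) x n)] of [(j +- k)^perp].  For (iii), the
    modes [e3 cos((1,1,0).x)] and [e3 sin((1,1,0).x)] are such combinations of values of [B] on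
    the coordinate modes, and combining them in turn with modes at [(0,0,1)] yields [F_(1,1,1)]. *)

From Stdlib Require Import Reals ZArith List ClassicalEpsilon Lra Lia FunctionalExtensionality.
Open Scope R_scope.

Lemma V3_eq a b : v1 a = v1 b -> v2 a = v2 b -> v3 a = v3 b -> a = b.
Proof. destruct a, b; simpl; intros; subst; reflexivity. Qed.

Ltac vring := apply V3_eq; simpl; ring.
Ltac fext := apply functional_extensionality; intro.

Lemma vdot_sym a b : vdot a b = vdot b a.
Proof. unfold vdot; ring. Qed.

Lemma vdot_addl a b x : vdot (vadd a b) x = vdot a x + vdot b x.
Proof. unfold vdot, vadd; simpl; ring. Qed.

Lemma vdot_scalel c a x : vdot (vscale c a) x = c * vdot a x.
Proof. unfold vdot, vscale; simpl; ring. Qed.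

Lemma vdot0l a : vdot vzero a = 0.
Proof. unfold vdot, vzero; simpl; ring. Qed.

Lemma vdot_self_eq0 a : vdot a a = 0 -> a = vzero.
Proof.
  destruct a as [x y z]; unfold vdot; simpl; intro H.
  assert (x = 0) by nra; assert (y = 0) by nra; assert (z = 0) by nra; subst; reflexivity.
Qed.

Lemma vscale_eq0 c w : c <> 0 -> vscale c w = vzero -> w = vzero.
Proof.
  intros Hc E; destruct w as [a b d]; unfold vscale in E; simpl in E; injection E; intros.
  apply V3_eq; simpl; apply (Rmult_eq_reg_l c); lra.
Qed.

Definition zneg (k : Z3) : Z3 := mkZ3 (- z1 k) (- z2 k) (- z3 k).

Lemma zeqb_spec j k : zeqb j k = true <-> j = k.
Proof.
  destruct j as [a b c], k as [d e f]; unfold zeqb; simpl.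
  rewrite !Bool.andb_true_iff, !Z.eqb_eq; split.
  - intros [[-> ->] ->]; reflexivity.
  - intro H; inversion H; auto.
Qed.

Lemma zeqb_zzero k : k <> zzero -> zeqb k zzero = false.
Proof. intro H; destruct (zeqb k zzero) eqn:E; auto; apply zeqb_spec in E; contradiction. Qed.

Lemma zeqb_zneg_zzero k : zeqb (zneg k) zzero = zeqb k zzero.
Proof. destruct k as [[] [] []]; reflexivity. Qed.

Lemma zneg_involutive k : zneg (zneg k) = k.
Proof. destruct k; unfold zneg; simpl; f_equal; lia. Qed.

Lemma zadd_comm j k : zadd k j = zadd j k.
Proof. destruct j, k; unfold zadd; simpl; f_equal; lia. Qed.

Lemma zsub_swap j k : zsub k j = zneg (zsub j k).
Proof. destruct j, k; unfold zsub, zneg; simpl; f_equal; lia. Qed.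

Lemma zsub_diag k : zsub k k = zzero.
Proof. destruct k; unfold zsub, zzero; simpl; f_equal; lia. Qed.

Lemma zR_add j k : zR (zadd j k) = vadd (zR j) (zR k).
Proof. destruct j, k; unfold zR, zadd, vadd; simpl; rewrite !plus_IZR; reflexivity. Qed.

Lemma zR_sub j k : zR (zsub j k) = vadd (zR j) (vscale (-1) (zR k)).
Proof. destruct j, k; unfold zR, zsub, vadd, vscale; simpl; rewrite !minus_IZR; f_equal; ring. Qed.

Lemma zR_neg k : zR (zneg k) = vscale (-1) (zR k).
Proof. destruct k; unfold zR, zneg, vscale; simpl; rewrite !opp_IZR; f_equal; ring. Qed.

Lemma zR_norm2_neq0 k : zeqb k zzero = false -> vdot (zR k) (zR k) <> 0.
Proof.
  intros H E; apply vdot_self_eq0 in E; destruct k as [a b c]; unfold zR in E; injection E.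
  intros Hc Hb Ha; apply eq_IZR in Ha, Hb, Hc; subst; discriminate.
Qed.

(** * Trigonometric polynomials *)

Definition rep := list (Z3 * V3 * V3).

Definition key (t : Z3 * V3 * V3) : Z3 := fst (fst t).
Arguments key t /.

Lemma eval_rep_cons k A B l x : eval_rep ((k, A, B) :: l) x = vadd (mode k A B x) (eval_rep l x).
Proof. reflexivity. Qed.

Lemma eval_rep_app l1 l2 x : eval_rep (l1 ++ l2) x = vadd (eval_rep l1 x) (eval_rep l2 x).
Proof.
  induction l1 as [|[[k A] B] l1 IH]; simpl; unfold fzero, fadd; [|rewrite IH]; vring.
Qed.

Lemma mode_rep k A B : mode k A B = eval_rep ((k, A, B) :: nil).
Proof. fext; simpl; unfold fadd, fzero; vring. Qed.

Lemma mode_zneg k A B x : mode (zneg k) A B x = mode k A (vscale (-1) B) x.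
Proof.
  unfold mode; rewrite zR_neg, vdot_scalel.
  replace (-1 * vdot (zR k) x) with (- vdot (zR k) x) by ring; rewrite cos_neg, sin_neg; vring.
Qed.

Definition scale_modes (f : Z3 -> R) (l : rep) : rep :=
  map (fun t => match t with (k, A, B) => (k, vscale (f k) A, vscale (f k) B) end) l.

Lemma eval_scale_modes_const f c l x :
  (forall t, In t l -> f (key t) = c) -> eval_rep (scale_modes f l) x = vscale c (eval_rep l x).
Proof.
  induction l as [|[[k A] B] l IH]; intro H; simpl; unfold fadd, fzero.
  - vring.
  - rewrite IH by (intros; apply H; right; assumption).
    specialize (H (k, A, B) (or_introl eq_refl)); simpl in H; rewrite H; unfold mode; vring.
Qed.

Lemma eval_scale_modes c l x : eval_rep (scale_modes (fun _ => c) l) x = vscale c (eval_rep l x).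
Proof. apply eval_scale_modes_const; reflexivity. Qed.

Definition linear_form (p : V3 -> R) : Prop :=
  (forall a b, p (vadd a b) = p a + p b) /\ (forall c a, p (vscale c a) = c * p a).

Lemma linear_form_v1 : linear_form v1. Proof. split; reflexivity. Qed.
Lemma linear_form_v2 : linear_form v2. Proof. split; reflexivity. Qed.
Lemma linear_form_v3 : linear_form v3. Proof. split; reflexivity. Qed.

Lemma linear_form_vzero p : linear_form p -> p vzero = 0.
Proof. intros [_ Hs]; replace vzero with (vscale 0 vzero) by vring; rewrite Hs; ring. Qed.

Lemma derivable_pt_lim_affine a b : derivable_pt_lim (fun t => a + b * t) 0 b.
Proof.
  pose proof (derivable_pt_lim_plus (fct_cte a) (mult_real_fct b id) 0 0 (b * 1)
    (derivable_pt_lim_const a 0) (derivable_pt_lim_scal id b 0 1 (derivable_pt_lim_id 0))) as H.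
  rewrite Rplus_0_l, Rmult_1_r in H; exact H.
Qed.

Lemma derivable_pt_lim_mulr f c t l :
  derivable_pt_lim f t l -> derivable_pt_lim (fun u => f u * c) t (l * c).
Proof.
  intro H; replace (fun u => f u * c) with (mult_real_fct c f)
    by (fext; unfold mult_real_fct; ring).
  rewrite Rmult_comm; apply derivable_pt_lim_scal, H.
Qed.

Lemma derivable_pt_lim_trig_affine a b cA cB :
  derivable_pt_lim (fun t => cos (a + b * t) * cA + sin (a + b * t) * cB) 0
    (- sin a * b * cA + cos a * b * cB).
Proof.
  assert (Ha : a + b * 0 = a) by ring.
  apply (derivable_pt_lim_plus (fun t => cos (a + b * t) * cA) (fun t => sin (a + b * t) * cB));
    apply derivable_pt_lim_mulr;
    apply (derivable_pt_lim_comp (fun t => a + b * t)); try apply derivable_pt_lim_affine; rewrite Ha.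
  - apply derivable_pt_lim_cos.
  - apply derivable_pt_lim_sin.
Qed.

Definition drep (d : V3) (l : rep) : rep :=
  map (fun t => match t with
                | (k, A, B) => (k, vscale (vdot (zR k) d) B, vscale (- vdot (zR k) d) A)
                end) l.

Lemma vdot_shift k x t d : vdot k (vadd x (vscale t d)) = vdot k x + vdot k d * t.
Proof. unfold vdot, vadd, vscale; simpl; ring. Qed.

Lemma derivable_pt_lim_eval_rep p d l x : linear_form p ->
  derivable_pt_lim (fun t => p (eval_rep l (vadd x (vscale t d)))) 0 (p (eval_rep (drep d l) x)).
Proof.
  intro Hp; pose proof Hp as [Hadd Hsc].
  induction l as [|[[k A] B] l IH]; simpl; unfold fzero, fadd.
  - rewrite (linear_form_vzero p Hp); apply derivable_pt_lim_const.
  - set (a := vdot (zR k) x); set (b := vdot (zR k) d).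
    replace (fun t => p (vadd (mode k A B (vadd x (vscale t d))) (eval_rep l (vadd x (vscale t d)))))
      with (fun t => (cos (a + b * t) * p A + sin (a + b * t) * p B)
                     + p (eval_rep l (vadd x (vscale t d))))
      by (fext; unfold mode; rewrite !Hadd, !Hsc, vdot_shift; reflexivity).
    unfold mode; rewrite !Hadd, !Hsc; fold a b.
    replace (cos a * (b * p B) + sin a * (- b * p A))
      with (- sin a * b * p A + cos a * b * p B) by ring.
    apply (derivable_pt_lim_plus (fun t => cos (a + b * t) * p A + sin (a + b * t) * p B)).
    + apply derivable_pt_lim_trig_affine.
    + exact IH.
Qed.

Lemma deriv1_eq h t l : derivable_pt_lim h t l -> deriv1 h t = l.
Proof.
  intro H; unfold deriv1.
  apply (uniqueness_limite h t); [|exact H].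
  exact (epsilon_spec (inhabits 0) (fun l => derivable_pt_lim h t l) (ex_intro _ l H)).
Qed.

Lemma pderiv_rep l d : pderiv (eval_rep l) d = eval_rep (drep d l).
Proof.
  fext; unfold pderiv; apply V3_eq; simpl; apply deriv1_eq, derivable_pt_lim_eval_rep.
  - apply linear_form_v1.
  - apply linear_form_v2.
  - apply linear_form_v3.
Qed.

Definition mul_modes (a b : R) (k : Z3) (C D : V3) (m : Z3) : rep :=
  (zadd k m, vadd (vscale (a/2) C) (vscale (-(b/2)) D), vadd (vscale (a/2) D) (vscale (b/2) C)) ::
  (zsub k m, vadd (vscale (a/2) C) (vscale (b/2) D), vadd (vscale (b/2) C) (vscale (-(a/2)) D)) :: nil.

Lemma eval_mul_modes a b k C D m x :
  eval_rep (mul_modes a b k C D m) x =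
  vscale (a * cos (vdot (zR k) x) + b * sin (vdot (zR k) x)) (mode m C D x).
Proof.
  unfold mul_modes; rewrite !eval_rep_cons; unfold mode; simpl; unfold fzero.
  rewrite zR_add, zR_sub, !vdot_addl, !vdot_scalel.
  replace (vdot (zR k) x + -1 * vdot (zR m) x) with (vdot (zR k) x - vdot (zR m) x) by ring.
  rewrite cos_plus, sin_plus, cos_minus, sin_minus.
  apply V3_eq; simpl; field.
Qed.

Definition mul_rep (p : V3 -> R) (l1 l2 : rep) : rep :=
  flat_map (fun t1 => match t1 with (k, A, B) =>
    flat_map (fun t2 => match t2 with (m, C, D) => mul_modes (p A) (p B) k C D m end) l2 end) l1.

Lemma eval_mul_mode_rep a b k l x :
  eval_rep (flat_map (fun t => match t with (m, C, D) => mul_modes a b k C D m end) l) x =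
  vscale (a * cos (vdot (zR k) x) + b * sin (vdot (zR k) x)) (eval_rep l x).
Proof.
  induction l as [|[[m C] D] l IH]; cbn [flat_map].
  - simpl; unfold fzero; vring.
  - rewrite eval_rep_app, IH, eval_mul_modes; unfold mode; vring.
Qed.

Lemma eval_mul_rep p l1 l2 x : linear_form p ->
  eval_rep (mul_rep p l1 l2) x = vscale (p (eval_rep l1 x)) (eval_rep l2 x).
Proof.
  intros Hp; pose proof Hp as [Hadd Hsc].
  unfold mul_rep; induction l1 as [|[[k A] B] l1 IH]; cbn [flat_map].
  - simpl; unfold fzero; rewrite (linear_form_vzero p Hp); vring.
  - rewrite eval_rep_app, eval_mul_mode_rep, IH; simpl; unfold fadd, mode; rewrite !Hadd, !Hsc; vring.
Qed.

Definition advect_rep (l1 l2 : rep) : rep :=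
  mul_rep v1 l1 (drep ev1 l2) ++ mul_rep v2 l1 (drep ev2 l2) ++ mul_rep v3 l1 (drep ev3 l2).

Lemma advect_eval_rep l1 l2 : advect (eval_rep l1) (eval_rep l2) = eval_rep (advect_rep l1 l2).
Proof.
  fext; unfold advect, advect_rep.
  rewrite !pderiv_rep, !eval_rep_app, !eval_mul_rep
    by (apply linear_form_v1 || apply linear_form_v2 || apply linear_form_v3).
  reflexivity.
Qed.

(** * Uniqueness of the Fourier coefficients *)

Definition same_class (j k : Z3) : bool := (zeqb j k || zeqb j (zneg k))%bool.

Definition class_part (c : Z3) (l : rep) : rep := filter (fun t => same_class (key t) c) l.
Definition class_rest (c : Z3) (l : rep) : rep := filter (fun t => negb (same_class (key t) c)) l.

Lemma same_class_spec j k : same_class j k = true <-> j = k \/ j = zneg k.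
Proof. unfold same_class; rewrite Bool.orb_true_iff, !zeqb_spec; tauto. Qed.

Lemma same_class_refl k : same_class k k = true.
Proof. apply same_class_spec; auto. Qed.

Lemma same_class_sym j k : same_class j k = same_class k j.
Proof.
  apply Bool.eq_true_iff_eq; rewrite !same_class_spec.
  split; intros [-> | ->]; auto; right; rewrite zneg_involutive; auto.
Qed.

Lemma same_class_trans a b c :
  same_class a b = true -> same_class b c = true -> same_class a c = true.
Proof. rewrite !same_class_spec; intros [-> | ->] [-> | ->]; auto; rewrite zneg_involutive; auto. Qed.

Lemma same_class_trans_false a b c :
  same_class a b = true -> same_class b c = false -> same_class a c = false.
Proof.
  intros Hab Hbc; destruct (same_class a c) eqn:Hac; auto.
  rewrite same_class_sym in Hab; rewrite (same_class_trans _ _ _ Hab Hac) in Hbc; discriminate.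
Qed.

Lemma in_class_part t c l : In t (class_part c l) <-> In t l /\ same_class (key t) c = true.
Proof. apply filter_In. Qed.

Lemma eval_rep_class_split c l x :
  eval_rep l x = vadd (eval_rep (class_part c l) x) (eval_rep (class_rest c l) x).
Proof.
  unfold class_part, class_rest; induction l as [|[[k A] B] l IH]; simpl; unfold fzero, fadd.
  - vring.
  - destruct (same_class k c); simpl; unfold fadd; rewrite IH; vring.
Qed.

Lemma class_part_rest c k0 l :
  class_part c (class_rest k0 l) = if same_class c k0 then nil else class_part c l.
Proof.
  unfold class_part, class_rest.
  induction l as [|t l IH]; cbn [filter]; [destruct (same_class c k0); reflexivity|].
  destruct (same_class (key t) k0) eqn:Ht; cbn [negb filter].
  - rewrite IH; destruct (same_class c k0) eqn:Hc; auto.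
    rewrite (same_class_trans_false (key t) k0 c Ht) by (rewrite same_class_sym; auto).
    reflexivity.
  - destruct (same_class (key t) c) eqn:Htc; rewrite IH; destruct (same_class c k0) eqn:Hc; auto.
    rewrite (same_class_trans _ _ _ Htc Hc) in Ht; discriminate.
Qed.

Lemma class_part_same c k0 l : same_class c k0 = true -> class_part c l = class_part k0 l.
Proof.
  intro Hc; apply filter_ext; intro t; apply Bool.eq_true_iff_eq; split; intro H.
  - exact (same_class_trans _ _ _ H Hc).
  - rewrite same_class_sym in Hc; exact (same_class_trans _ _ _ H Hc).
Qed.

Lemma class_rest_length t0 r : (length (class_rest (key t0) (t0 :: r)) < length (t0 :: r))%nat.
Proof.
  unfold class_rest; cbn [filter]; rewrite same_class_refl; cbn [negb length].
  apply Nat.lt_succ_r, filter_length_le.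
Qed.

Lemma eval_rep_zero_of_class_parts l :
  (forall c, eval_rep (class_part c l) = fzero) -> eval_rep l = fzero.
Proof.
  induction l as [[|t0 r] IH] using (induction_ltof1 _ (@length _)); intro H; [reflexivity|].
  assert (Hrest : eval_rep (class_rest (key t0) (t0 :: r)) = fzero).
  { apply IH; [apply class_rest_length|].
    intro c; rewrite class_part_rest; destruct (same_class c (key t0)); auto. }
  fext; rewrite (eval_rep_class_split (key t0)), H, Hrest; unfold fzero; vring.
Qed.

Definition second_diff (s : R) (v : V3) (k0 : Z3) (g : Field) : Field := fun x =>
  vadd (vadd (g (vadd x (vscale s v))) (g (vadd x (vscale (-s) v))))
       (vscale (-(2 * cos (s * vdot (zR k0) v))) (g x)).

Definition second_diff_factor (s : R) (v : V3) (k0 k : Z3) : R :=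
  2 * cos (s * vdot (zR k) v) - 2 * cos (s * vdot (zR k0) v).

Lemma second_diff_rep s v k0 l :
  second_diff s v k0 (eval_rep l) = eval_rep (scale_modes (second_diff_factor s v k0) l).
Proof.
  fext; rename x into y; induction l as [|[[k A] B] l IH]; unfold second_diff in *; simpl in *;
    unfold fzero, fadd in *; [vring|].
  rewrite <- IH; unfold mode, second_diff_factor; rewrite !vdot_shift.
  replace (vdot (zR k) y + vdot (zR k) v * - s) with (vdot (zR k) y - s * vdot (zR k) v) by ring.
  replace (vdot (zR k) y + vdot (zR k) v * s) with (vdot (zR k) y + s * vdot (zR k) v) by ring.
  rewrite cos_plus, sin_plus, cos_minus, sin_minus; vring.
Qed.

Lemma second_diff_factor_class s v k0 k c :
  same_class k c = true -> second_diff_factor s v k0 k = second_diff_factor s v k0 c.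
Proof.
  intro H; apply same_class_spec in H; destruct H as [-> | ->]; [reflexivity|].
  unfold second_diff_factor; rewrite zR_neg, vdot_scalel.
  replace (s * (-1 * vdot (zR c) v)) with (- (s * vdot (zR c) v)) by ring; rewrite cos_neg; ring.
Qed.

Lemma second_diff_factor_self s v k0 : second_diff_factor s v k0 k0 = 0.
Proof. unfold second_diff_factor; ring. Qed.

Definition zcode (N : Z) (k : Z3) : Z := (z1 k + z2 k * N + z3 k * (N * N))%Z.

Definition zbounded (M : Z) (k : Z3) : Prop :=
  (Z.abs (z1 k) <= M /\ Z.abs (z2 k) <= M /\ Z.abs (z3 k) <= M)%Z.

Lemma zcode_eq0 M d :
  (0 <= M)%Z -> zbounded (2 * M) d -> zcode (4 * M + 1) d = 0%Z -> d = zzero.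
Proof.
  destruct d as [d1 d2 d3]; unfold zbounded, zcode; cbn [z1 z2 z3]; intros HM (H1 & H2 & H3) E.
  set (N := (4 * M + 1)%Z) in *.
  assert (HN : (2 * M * (1 + N) < N * N)%Z) by (unfold N; nia).
  assert (d3 = 0%Z).
  { apply Z.abs_le in H1; apply Z.abs_le in H2.
    destruct (Z.lt_trichotomy d3 0) as [h|[h|h]]; auto.
    - assert (d3 * (N * N) <= - (N * N))%Z by nia; nia.
    - assert (d3 * (N * N) >= N * N)%Z by nia; nia. }
  subst d3; apply Z.abs_le in H1.
  assert (d2 = 0%Z) by (destruct (Z.lt_trichotomy d2 0) as [h|[h|h]]; auto; nia).
  subst d2; unfold zzero; f_equal; lia.
Qed.

Lemma zcode_zsub N j k : zcode N (zsub j k) = (zcode N j - zcode N k)%Z.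
Proof. unfold zcode, zsub; cbn [z1 z2 z3]; ring. Qed.

Lemma zcode_zadd N j k : zcode N (zadd j k) = (zcode N j + zcode N k)%Z.
Proof. unfold zcode, zadd; cbn [z1 z2 z3]; ring. Qed.

Lemma zbounded_zsub M j k : zbounded M j -> zbounded M k -> zbounded (2 * M) (zsub j k).
Proof. unfold zbounded, zsub; cbn [z1 z2 z3]; lia. Qed.

Lemma zbounded_zadd M j k : zbounded M j -> zbounded M k -> zbounded (2 * M) (zadd j k).
Proof. unfold zbounded, zadd; cbn [z1 z2 z3]; lia. Qed.

Lemma zcode_same_class M j k : (0 <= M)%Z -> zbounded M j -> zbounded M k ->
  Z.abs (zcode (4 * M + 1) j) = Z.abs (zcode (4 * M + 1) k) -> same_class j k = true.
Proof.
  intros HM Hj Hk E; apply same_class_spec.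
  assert (Hcases : zcode (4 * M + 1) j = zcode (4 * M + 1) k
                   \/ zcode (4 * M + 1) j = (- zcode (4 * M + 1) k)%Z) by lia.
  destruct Hcases as [E'|E'].
  - left; assert (H : zsub j k = zzero).
    { apply (zcode_eq0 M); auto using zbounded_zsub; rewrite zcode_zsub; lia. }
    destruct j, k; unfold zsub, zzero in H; injection H; intros; f_equal; lia.
  - right; assert (H : zadd j k = zzero).
    { apply (zcode_eq0 M); auto using zbounded_zadd; rewrite zcode_zadd; lia. }
    destruct j, k; unfold zadd, zzero in H; injection H; unfold zneg; simpl; intros; f_equal; lia.
Qed.

Lemma zcode_bound M N k : (0 <= N)%Z -> zbounded M k ->
  (Z.abs (zcode N k) <= M * (1 + N + N * N))%Z.
Proof.
  unfold zbounded, zcode; intros HN (H1 & H2 & H3).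
  apply Z.abs_le in H1; apply Z.abs_le in H2; apply Z.abs_le in H3; apply Z.abs_le; split; nia.
Qed.

Lemma vdot_zR_zcode N k : vdot (zR k) (mkV3 1 (IZR N) (IZR (N * N))) = IZR (zcode N k).
Proof. unfold vdot, zR, zcode; simpl; rewrite !plus_IZR, !mult_IZR; ring. Qed.

Lemma exists_zbounded (ks : list Z3) : exists M, (0 <= M)%Z /\ forall k, In k ks -> zbounded M k.
Proof.
  induction ks as [|k ks [M [HM IH]]]; [exists 0%Z; split; [lia | contradiction]|].
  exists (Z.max M (Z.max (Z.abs (z1 k)) (Z.max (Z.abs (z2 k)) (Z.abs (z3 k))))); split; [lia|].
  intros k' [<- | Hk']; unfold zbounded; [lia|].
  destruct (IH k' Hk') as (H1 & H2 & H3); lia.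
Qed.

Lemma cos_abs_IZR s z : cos (s * IZR z) = cos (s * IZR (Z.abs z)).
Proof.
  destruct (Z.abs_eq_or_opp z) as [E|E]; rewrite E; [reflexivity|].
  rewrite opp_IZR; replace (s * - IZR z) with (- (s * IZR z)) by ring; rewrite cos_neg; reflexivity.
Qed.

Lemma cos_grid_injective W a b : (0 <= a <= W)%Z -> (0 <= b <= W)%Z -> a <> b ->
  cos (PI / IZR (W + 1) * IZR a) <> cos (PI / IZR (W + 1) * IZR b).
Proof.
  intros Ha Hb Hab.
  assert (HW : 0 < IZR (W + 1)) by (apply IZR_lt; lia).
  assert (Hs : 0 < PI / IZR (W + 1)) by (apply Rdiv_lt_0_compat; [apply PI_RGT_0 | exact HW]).
  assert (HsW : PI / IZR (W + 1) * IZR (W + 1) = PI) by (field; lra).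
  assert (Hgrid : forall z, (0 <= z <= W)%Z -> 0 <= PI / IZR (W + 1) * IZR z <= PI).
  { intros z Hz; assert (IZR z <= IZR (W + 1)) by (apply IZR_le; lia).
    assert (0 <= IZR z) by (apply IZR_le; lia).
    split; [apply Rmult_le_pos; lra|].
    apply Rle_trans with (PI / IZR (W + 1) * IZR (W + 1)); [apply Rmult_le_compat_l|]; lra. }
  assert (Hlt : forall a b, (0 <= a <= W)%Z -> (0 <= b <= W)%Z -> (a < b)%Z ->
    cos (PI / IZR (W + 1) * IZR b) < cos (PI / IZR (W + 1) * IZR a)).
  { intros x y Hx Hy Hxy; destruct (Hgrid x Hx), (Hgrid y Hy).
    apply cos_decreasing_1; auto; apply Rmult_lt_compat_l; [exact Hs | apply IZR_lt, Hxy]. }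
  assert (H : (a < b \/ b < a)%Z) by lia.
  destruct H as [H|H]; [specialize (Hlt a b Ha Hb H) | specialize (Hlt b a Hb Ha H)]; lra.
Qed.

(** [v = (1, N, N^2)] separates the classes of all the frequencies by [|k.v|], and
    [s = PI/(W+1)] maps these values into [[0, PI]], where [cos] is injective. *)
Lemma exists_separating_shift k0 (ks : list Z3) : exists s v,
  forall k, In k ks -> same_class k k0 = false -> second_diff_factor s v k0 k <> 0.
Proof.
  destruct (exists_zbounded (k0 :: ks)) as [M [HM Hbd]].
  set (N := (4 * M + 1)%Z); set (W := (M * (1 + N + N * N))%Z).
  exists (PI / IZR (W + 1)), (mkV3 1 (IZR N) (IZR (N * N))).
  intros k Hk Hc; unfold second_diff_factor; rewrite !vdot_zR_zcode, !(cos_abs_IZR _ (zcode N _)).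
  assert (Hk0 := Hbd k0 (or_introl eq_refl)); assert (Hkk := Hbd k (or_intror Hk)).
  assert (Hneq : Z.abs (zcode N k) <> Z.abs (zcode N k0)).
  { intro E; rewrite (zcode_same_class M k k0 HM Hkk Hk0 E) in Hc; discriminate. }
  assert (HN : (0 <= N)%Z) by (unfold N; lia).
  pose proof (zcode_bound M N k HN Hkk); pose proof (zcode_bound M N k0 HN Hk0).
  intro E; apply (cos_grid_injective W (Z.abs (zcode N k)) (Z.abs (zcode N k0)));
    unfold W in *; first [lia | lra].
Qed.

Lemma filter_key_scale_modes (P : Z3 -> bool) f l :
  filter (fun t => P (key t)) (scale_modes f l) = scale_modes f (filter (fun t => P (key t)) l).
Proof. unfold scale_modes; rewrite filter_map_swap; f_equal; apply filter_ext; intros [[k A] B]; reflexivity. Qed.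

Lemma class_part_scale_modes f c l : class_part c (scale_modes f l) = scale_modes f (class_part c l).
Proof. apply (filter_key_scale_modes (fun k => same_class k c)). Qed.

Lemma class_rest_scale_modes f c l : class_rest c (scale_modes f l) = scale_modes f (class_rest c l).
Proof. apply (filter_key_scale_modes (fun k => negb (same_class k c))). Qed.

Lemma eval_scale_modes_class_part s v k0 c l x :
  eval_rep (scale_modes (second_diff_factor s v k0) (class_part c l)) x
  = vscale (second_diff_factor s v k0 c) (eval_rep (class_part c l) x).
Proof.
  apply eval_scale_modes_const; intros t Ht; apply in_class_part in Ht.
  apply second_diff_factor_class, Ht.
Qed.

Lemma second_diff_class_rest s v k0 l : eval_rep l = fzero ->
  eval_rep (scale_modes (second_diff_factor s v k0) (class_rest k0 l)) = fzero.
Proof.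
  intro Hl; fext; assert (E : second_diff s v k0 (eval_rep l) x = vzero)
    by (rewrite Hl; unfold second_diff, fzero; vring).
  rewrite second_diff_rep, (eval_rep_class_split k0), class_part_scale_modes,
    class_rest_scale_modes, eval_scale_modes_class_part, second_diff_factor_self in E.
  unfold fzero; rewrite <- E; vring.
Qed.

Lemma class_part_zero_of_rest k0 l : eval_rep l = fzero -> eval_rep (class_rest k0 l) = fzero ->
  eval_rep (class_part k0 l) = fzero.
Proof.
  intros Hl Hr; fext.
  transitivity (vadd (eval_rep (class_part k0 l) x) (eval_rep (class_rest k0 l) x)).
  - rewrite Hr; unfold fzero; vring.
  - rewrite <- eval_rep_class_split, Hl; reflexivity.
Qed.

(** Induction on the number of modes: the second difference along a shift
    separating the class of the first mode from all others removes that class and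
    multiplies every other class by a nonzero constant. *)
Lemma class_parts_zero l : eval_rep l = fzero -> forall c, eval_rep (class_part c l) = fzero.
Proof.
  induction l as [[|t0 r] IH] using (induction_ltof1 _ (@length _)); intros Hl c; [reflexivity|].
  set (l := t0 :: r) in *; set (k0 := key t0).
  destruct (exists_separating_shift k0 (map key l)) as [s [v Hsv]].
  set (f := second_diff_factor s v k0).
  assert (Hother : forall c, same_class c k0 = false -> eval_rep (class_part c l) = fzero).
  { intros c' Hc'.
    assert (Hlen : ltof _ (@length _) (scale_modes f (class_rest k0 l)) l)
      by (unfold ltof, scale_modes; rewrite length_map; apply class_rest_length).
    pose proof (IH _ Hlen (second_diff_class_rest s v k0 l Hl) c') as H.
    rewrite class_part_scale_modes, class_part_rest, Hc' in H.
    destruct (class_part c' l) as [|t1 r1] eqn:Ecl; [reflexivity|].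
    assert (Ht1 : In t1 (class_part c' l)) by (rewrite Ecl; left; reflexivity).
    apply in_class_part in Ht1 as [Ht1l Ht1c]; rewrite <- Ecl.
    fext; apply (vscale_eq0 (f c')).
    - unfold f; rewrite <- (second_diff_factor_class s v k0 _ _ Ht1c).
      apply Hsv; [apply in_map, Ht1l | exact (same_class_trans_false _ _ _ Ht1c Hc')].
    - unfold f; rewrite <- eval_scale_modes_class_part, Ecl; fold f; rewrite H; reflexivity. }
  destruct (same_class c k0) eqn:Hc; [|exact (Hother c Hc)].
  rewrite (class_part_same c k0 l Hc); apply class_part_zero_of_rest; [exact Hl|].
  apply eval_rep_zero_of_class_parts; intro c'; rewrite class_part_rest.
  destruct (same_class c' k0) eqn:Hc'; [reflexivity | exact (Hother c' Hc')].
Qed.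

(** * The Leray projection on trigonometric polynomials *)

Lemma leray_symbol_zneg c v : leray_symbol (zneg c) v = leray_symbol c v.
Proof.
  unfold leray_symbol; rewrite zeqb_zneg_zzero; destruct (zeqb c zzero); [reflexivity|].
  rewrite zR_neg; replace (vdot (vscale (-1) (zR c)) (vscale (-1) (zR c))) with (vdot (zR c) (zR c))
    by (unfold vdot, vscale; simpl; ring).
  unfold vdot, vscale, vadd; apply V3_eq; simpl; unfold Rdiv; ring.
Qed.

Lemma leray_symbol_add c a b : leray_symbol c (vadd a b) = vadd (leray_symbol c a) (leray_symbol c b).
Proof.
  unfold leray_symbol; destruct (zeqb c zzero); [vring|].
  unfold vdot, vscale, vadd; apply V3_eq; simpl; unfold Rdiv; ring.
Qed.

Lemma leray_symbol_scale c r a : leray_symbol c (vscale r a) = vscale r (leray_symbol c a).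
Proof.
  unfold leray_symbol; destruct (zeqb c zzero); [vring|].
  unfold vdot, vscale, vadd; apply V3_eq; simpl; unfold Rdiv; ring.
Qed.

Lemma leray_symbol_vzero c : leray_symbol c vzero = vzero.
Proof. replace vzero with (vscale 0 vzero) by vring; rewrite leray_symbol_scale; vring. Qed.

Lemma leray_symbol_perp c v : zeqb c zzero = false -> vdot (leray_symbol c v) (zR c) = 0.
Proof.
  intro E; unfold leray_symbol; rewrite E; pose proof (zR_norm2_neq0 c E) as Hc.
  revert Hc; generalize (zR c); intros [z1 z2 z3] Hc; destruct v; unfold vdot in *; simpl in *.
  field; exact Hc.
Qed.

(** A list of modes at [c] and [-c] written as one mode at [c]: a mode at [-c] contributes
    [-B] to the sine coefficient. *)
Definition class_cos (l : rep) : V3 :=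
  fold_right (fun t acc => match t with (k, A, B) => vadd A acc end) vzero l.
Definition class_sin (c : Z3) (l : rep) : V3 :=
  fold_right (fun t acc => match t with
                           | (k, A, B) => vadd (vscale (if zeqb k c then 1 else -1) B) acc
                           end) vzero l.

Definition in_class (c : Z3) (l : rep) : Prop := forall t, In t l -> same_class (key t) c = true.

Lemma in_class_cons c t l : in_class c (t :: l) -> same_class (key t) c = true /\ in_class c l.
Proof. intro H; split; [apply H; left; reflexivity | intros t' Ht'; apply H; right; exact Ht']. Qed.

Lemma eval_class_mode c l x : in_class c l -> eval_rep l x = mode c (class_cos l) (class_sin c l) x.
Proof.
  induction l as [|[[k A] B] l IH]; intro H; simpl; unfold fzero, fadd.
  - unfold mode; vring.
  - apply in_class_cons in H as [Hk H]; simpl in Hk; rewrite IH by exact H.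
    destruct (zeqb k c) eqn:E.
    + apply zeqb_spec in E; subst; unfold mode; vring.
    + apply same_class_spec in Hk as [Hk | ->]; [apply zeqb_spec in Hk; congruence|].
      rewrite mode_zneg; unfold mode; vring.
Qed.

Lemma proj_rep_in_class c l : in_class c l -> in_class c (proj_rep l).
Proof.
  induction l as [|[[k A] B] l IH]; simpl; intros H t Ht; [contradiction|].
  apply in_class_cons in H as [Hk H]; destruct Ht as [<- | Ht]; [exact Hk | exact (IH H t Ht)].
Qed.

Lemma class_cos_proj c l : in_class c l -> class_cos (proj_rep l) = leray_symbol c (class_cos l).
Proof.
  induction l as [|[[k A] B] l IH]; intro H; simpl; [rewrite leray_symbol_vzero; reflexivity|].
  apply in_class_cons in H as [Hk H]; simpl in Hk; rewrite IH, leray_symbol_add by exact H.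
  apply same_class_spec in Hk as [-> | ->]; [|rewrite leray_symbol_zneg]; reflexivity.
Qed.

Lemma class_sin_proj c l : in_class c l -> class_sin c (proj_rep l) = leray_symbol c (class_sin c l).
Proof.
  induction l as [|[[k A] B] l IH]; intro H; simpl; [rewrite leray_symbol_vzero; reflexivity|].
  apply in_class_cons in H as [Hk H]; simpl in Hk.
  rewrite IH, leray_symbol_add, leray_symbol_scale by exact H.
  apply same_class_spec in Hk as [-> | ->]; [|rewrite leray_symbol_zneg]; reflexivity.
Qed.

Lemma mode_eq0 c A B : zeqb c zzero = false -> mode c A B = fzero -> A = vzero /\ B = vzero.
Proof.
  intros Hc E; split.
  - assert (E0 := f_equal (fun f => f vzero) E); simpl in E0; unfold mode, fzero in E0.
    replace (vdot (zR c) vzero) with 0 in E0 by (unfold vdot; simpl; ring).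
    rewrite cos_0, sin_0 in E0; rewrite <- E0; vring.
  - set (x := vscale (PI / 2 / vdot (zR c) (zR c)) (zR c)).
    assert (E0 := f_equal (fun f => f x) E); simpl in E0; unfold mode, fzero in E0.
    replace (vdot (zR c) x) with (PI / 2) in E0
      by (unfold x; rewrite vdot_sym, vdot_scalel; field; apply zR_norm2_neq0, Hc).
    rewrite cos_PI2, sin_PI2 in E0; rewrite <- E0; vring.
Qed.

Lemma class_part_proj c l : class_part c (proj_rep l) = proj_rep (class_part c l).
Proof.
  unfold proj_rep, class_part; rewrite filter_map_swap; f_equal.
  apply filter_ext; intros [[k A] B]; reflexivity.
Qed.

Lemma class_part_in_class c l : in_class c (class_part c l).
Proof. intros t Ht; apply in_class_part in Ht; apply Ht. Qed.

(** A mode at [c] vanishes only if both its coefficients do, and then so do their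
    projections; this is where uniqueness of the coefficients enters. *)
Lemma proj_rep_zero l : eval_rep l = fzero -> eval_rep (proj_rep l) = fzero.
Proof.
  intro Hl; apply eval_rep_zero_of_class_parts; intro c; rewrite class_part_proj.
  pose proof (class_part_in_class c l) as Hcl; pose proof (class_parts_zero l Hl c) as Hc.
  fext; rewrite (eval_class_mode c) by (apply proj_rep_in_class, Hcl).
  rewrite (class_cos_proj c), (class_sin_proj c) by exact Hcl.
  destruct (zeqb c zzero) eqn:E0; [unfold leray_symbol; rewrite E0; unfold mode, fzero; vring|].
  assert (Hm : mode c (class_cos (class_part c l)) (class_sin c (class_part c l)) = fzero)
    by (fext; rewrite <- eval_class_mode by exact Hcl; rewrite Hc; reflexivity).
  destruct (mode_eq0 c _ _ E0 Hm) as [-> ->]; rewrite leray_symbol_vzero; unfold mode, fzero; vring.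
Qed.

Lemma proj_rep_scale_modes f l : proj_rep (scale_modes f l) = scale_modes f (proj_rep l).
Proof.
  induction l as [|[[k A] B] l IH]; simpl; [reflexivity|]; rewrite IH, !leray_symbol_scale; reflexivity.
Qed.

Lemma proj_rep_app l1 l2 : proj_rep (l1 ++ l2) = proj_rep l1 ++ proj_rep l2.
Proof. apply map_app. Qed.

(** [Leray] picks some representation [l'] of [eval_rep l]; the choice is irrelevant since
    [l - l'] represents zero. *)
Lemma Leray_rep l : Leray (eval_rep l) = eval_rep (proj_rep l).
Proof.
  unfold Leray.
  destruct (epsilon_spec (inhabits fzero)
    (fun g => exists l', eval_rep l = eval_rep l' /\ g = eval_rep (proj_rep l'))
    (ex_intro _ _ (ex_intro _ l (conj eq_refl eq_refl)))) as [l' [E1 ->]].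
  assert (HD : eval_rep (l ++ scale_modes (fun _ => -1) l') = fzero)
    by (fext; rewrite eval_rep_app, eval_scale_modes, E1; unfold fzero; vring).
  apply proj_rep_zero in HD; rewrite proj_rep_app, proj_rep_scale_modes in HD.
  fext; assert (E := f_equal (fun f => f x) HD); simpl in E.
  rewrite eval_rep_app, eval_scale_modes in E; unfold fzero in E.
  destruct (eval_rep (proj_rep l) x), (eval_rep (proj_rep l') x); injection E; intros.
  apply V3_eq; simpl; lra.
Qed.

Lemma Bop_rep l1 l2 :
  Bop (eval_rep l1) (eval_rep l2) = eval_rep (proj_rep (advect_rep l1 l2 ++ advect_rep l2 l1)).
Proof.
  unfold Bop; rewrite !advect_eval_rep, <- Leray_rep; f_equal; fext; unfold fadd.
  rewrite eval_rep_app; reflexivity.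
Qed.

(** * [B] on two modes *)

Definition bplus_cos j k A B C D : V3 := vscale (1/2)
  (vadd (vadd (vscale (vdot A (zR k)) D) (vscale (vdot C (zR j)) B))
        (vadd (vscale (vdot B (zR k)) C) (vscale (vdot D (zR j)) A))).
Definition bplus_sin j k A B C D : V3 := vscale (1/2)
  (vadd (vadd (vscale (- vdot A (zR k)) C) (vscale (vdot D (zR j)) B))
        (vadd (vscale (vdot B (zR k)) D) (vscale (- vdot C (zR j)) A))).
Definition bminus_cos j k A B C D : V3 := vscale (1/2)
  (vadd (vadd (vscale (vdot A (zR k)) D) (vscale (vdot C (zR j)) B))
        (vadd (vscale (- vdot B (zR k)) C) (vscale (- vdot D (zR j)) A))).
Definition bminus_sin j k A B C D : V3 := vscale (1/2)
  (vadd (vadd (vscale (vdot A (zR k)) C) (vscale (- vdot D (zR j)) B))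
        (vadd (vscale (vdot B (zR k)) D) (vscale (- vdot C (zR j)) A))).

Lemma Bop_modes j k A B C D :
  Bop (mode j A B) (mode k C D) =
  fadd (mode (zadd j k) (leray_symbol (zadd j k) (bplus_cos j k A B C D))
                        (leray_symbol (zadd j k) (bplus_sin j k A B C D)))
       (mode (zsub j k) (leray_symbol (zsub j k) (bminus_cos j k A B C D))
                        (leray_symbol (zsub j k) (bminus_sin j k A B C D))).
Proof.
  rewrite !mode_rep, Bop_rep; fext.
  unfold advect_rep, mul_rep, drep, mul_modes, proj_rep; cbn [flat_map map app].
  rewrite !eval_rep_cons; cbn [eval_rep]; unfold fzero.
  rewrite !(zadd_comm j k), !(zsub_swap j k), !leray_symbol_zneg, !mode_zneg.
  unfold bplus_cos, bplus_sin, bminus_cos, bminus_sin.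
  repeat rewrite ?leray_symbol_add, ?leray_symbol_scale.
  generalize (leray_symbol (zadd j k) A) (leray_symbol (zadd j k) B) (leray_symbol (zadd j k) C)
    (leray_symbol (zadd j k) D) (leray_symbol (zsub j k) A) (leray_symbol (zsub j k) B)
    (leray_symbol (zsub j k) C) (leray_symbol (zsub j k) D).
  intros LA LB LC LD MA MB MC MD; unfold mode, fadd.
  generalize (cos (vdot (zR (zadd j k)) x)) (sin (vdot (zR (zadd j k)) x))
    (cos (vdot (zR (zsub j k)) x)) (sin (vdot (zR (zsub j k)) x)).
  intros c1 s1 c2 s2; unfold vdot, ev1, ev2, ev3.
  destruct j as [j1 j2 j3], k as [k1 k2 k3]; unfold zR; cbn [z1 z2 z3].
  apply V3_eq; cbn [v1 v2 v3 vadd vscale vzero]; unfold Rdiv; ring.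
Qed.

Lemma span_in S g : S g -> span S g.
Proof.
  intro H; replace g with (fadd (fscale 1 g) fzero) by (fext; unfold fadd, fscale, fzero; vring).
  apply span_cons; [exact H | apply span_zero].
Qed.

Lemma span_add S f g : span S f -> span S g -> span S (fadd f g).
Proof.
  intros Hf Hg; induction Hf as [|c g0 h Hg0 Hh IH].
  - replace (fadd fzero g) with g by (fext; unfold fadd, fzero; vring); exact Hg.
  - replace (fadd (fadd (fscale c g0) h) g) with (fadd (fscale c g0) (fadd h g))
      by (fext; unfold fadd, fscale; vring).
    apply span_cons; assumption.
Qed.

Lemma span_scale S r f : span S f -> span S (fscale r f).
Proof.
  intro Hf; induction Hf as [|c g h Hg Hh IH].
  - replace (fscale r fzero) with fzero by (fext; unfold fscale, fzero; vring); apply span_zero.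
  - replace (fscale r (fadd (fscale c g) h)) with (fadd (fscale (r * c) g) (fscale r h))
      by (fext; unfold fadd, fscale; vring).
    apply span_cons; assumption.
Qed.

Lemma span_subset S T : subset S (span T) -> subset (span S) (span T).
Proof.
  intros H f Hf; induction Hf; [apply span_zero|].
  apply span_add; [apply span_scale, H|]; assumption.
Qed.

Lemma Fk_mode k A B : k <> zzero -> vdot A (zR k) = 0 -> vdot B (zR k) = 0 -> Fk k (mode k A B).
Proof. intros Hk HA HB; unfold Fk; rewrite zeqb_zzero by exact Hk; exists A, B; auto. Qed.

Lemma Fk_inv k f : k <> zzero -> Fk k f ->
  exists A B, vdot A (zR k) = 0 /\ vdot B (zR k) = 0 /\ f = mode k A B.
Proof. intros Hk H; unfold Fk in H; rewrite zeqb_zzero in H by exact Hk; exact H. Qed.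

Lemma mode_vzero k : mode k vzero vzero = fzero.
Proof. fext; unfold mode, fzero; vring. Qed.

Lemma Fk_mode_leray k U V : Fk k (mode k (leray_symbol k U) (leray_symbol k V)).
Proof.
  unfold Fk; destruct (zeqb k zzero) eqn:E.
  - unfold leray_symbol; rewrite E; apply mode_vzero.
  - exists (leray_symbol k U), (leray_symbol k V); split; [|split]; auto; apply leray_symbol_perp, E.
Qed.

Lemma Bop_same_mode k A B C D :
  vdot A (zR k) = 0 -> vdot B (zR k) = 0 -> vdot C (zR k) = 0 -> vdot D (zR k) = 0 ->
  Bop (mode k A B) (mode k C D) = fzero.
Proof.
  intros HA HB HC HD; rewrite Bop_modes, zsub_diag.
  replace (bplus_cos k k A B C D) with vzero by (unfold bplus_cos; rewrite HA, HB, HC, HD; vring).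
  replace (bplus_sin k k A B C D) with vzero by (unfold bplus_sin; rewrite HA, HB, HC, HD; vring).
  unfold leray_symbol at 3 4; simpl.
  rewrite leray_symbol_vzero, !mode_vzero; fext; unfold fadd, fzero; vring.
Qed.

Lemma Bop_Fk_same k : k <> zzero -> forall e e', Fk k e -> Fk k e' -> Bop e e' = fzero.
Proof.
  intros Hk e e' He He'.
  destruct (Fk_inv k e Hk He) as (A & B & HA & HB & ->).
  destruct (Fk_inv k e' Hk He') as (C & D & HC & HD & ->).
  apply Bop_same_mode; assumption.
Qed.

Lemma Bop_Fk_span j k e e' : j <> zzero -> k <> zzero -> Fk j e -> Fk k e' ->
  span (set_union (Fk (zsub j k)) (Fk (zadd j k))) (Bop e e').
Proof.
  intros Hj Hk He He'.
  destruct (Fk_inv j e Hj He) as (A & B & _ & _ & ->).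
  destruct (Fk_inv k e' Hk He') as (C & D & _ & _ & ->).
  rewrite Bop_modes; apply span_add; apply span_in; [right | left]; apply Fk_mode_leray.
Qed.

Lemma Bset_span_Fk_pm j k : j <> zzero -> k <> zzero ->
  subset (span (Bset j k)) (span (set_union (Fk (zsub j k)) (Fk (zadd j k)))).
Proof.
  intros Hj Hk; apply span_subset; intros f (e & e' & He & He' & ->); apply Bop_Fk_span; assumption.
Qed.

Definition trig_poly (f : Field) : Prop := exists l, f = eval_rep l.

Lemma trig_poly_mode k A B : trig_poly (mode k A B).
Proof. exists ((k, A, B) :: nil); apply mode_rep. Qed.

Lemma trig_poly_Bop f g : trig_poly f -> trig_poly g -> trig_poly (Bop f g).
Proof. intros [l1 ->] [l2 ->]; rewrite Bop_rep; eexists; reflexivity. Qed.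

Lemma trig_poly_fscale c f : trig_poly f -> trig_poly (fscale c f).
Proof. intros [l ->]; exists (scale_modes (fun _ => c) l); fext; rewrite eval_scale_modes; reflexivity. Qed.

Lemma trig_poly_advect_sym f g : trig_poly f -> trig_poly g -> trig_poly (fadd (advect f g) (advect g f)).
Proof.
  intros [l1 ->] [l2 ->]; exists (advect_rep l1 l2 ++ advect_rep l2 l1).
  rewrite !advect_eval_rep; fext; unfold fadd; rewrite eval_rep_app; reflexivity.
Qed.

Lemma lin_eval_rep c1 c2 l1 l2 :
  fadd (fscale c1 (eval_rep l1)) (fscale c2 (eval_rep l2))
  = eval_rep (scale_modes (fun _ => c1) l1 ++ scale_modes (fun _ => c2) l2).
Proof. fext; rewrite eval_rep_app, !eval_scale_modes; reflexivity. Qed.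

Lemma Leray_lin c1 c2 f1 f2 : trig_poly f1 -> trig_poly f2 ->
  Leray (fadd (fscale c1 f1) (fscale c2 f2)) = fadd (fscale c1 (Leray f1)) (fscale c2 (Leray f2)).
Proof.
  intros [l1 ->] [l2 ->].
  rewrite lin_eval_rep, !Leray_rep, proj_rep_app, !proj_rep_scale_modes, <- lin_eval_rep.
  reflexivity.
Qed.

Lemma pderiv_lin c1 c2 f1 f2 d : trig_poly f1 -> trig_poly f2 ->
  pderiv (fadd (fscale c1 f1) (fscale c2 f2)) d = fadd (fscale c1 (pderiv f1 d)) (fscale c2 (pderiv f2 d)).
Proof.
  intros [l1 ->] [l2 ->]; rewrite lin_eval_rep, !pderiv_rep.
  assert (E : drep d (scale_modes (fun _ => c1) l1 ++ scale_modes (fun _ => c2) l2)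
              = scale_modes (fun _ => c1) (drep d l1) ++ scale_modes (fun _ => c2) (drep d l2)).
  { unfold drep, scale_modes; rewrite map_app, !map_map; f_equal; apply map_ext;
      intros [[k A] B]; (apply f_equal2; [apply f_equal|]; vring). }
  rewrite E, <- lin_eval_rep; reflexivity.
Qed.

Lemma Bop_lin_l c1 c2 f1 f2 g : trig_poly f1 -> trig_poly f2 -> trig_poly g ->
  Bop (fadd (fscale c1 f1) (fscale c2 f2)) g = fadd (fscale c1 (Bop f1 g)) (fscale c2 (Bop f2 g)).
Proof.
  intros H1 H2 H3; unfold Bop; rewrite <- Leray_lin by (apply trig_poly_advect_sym; assumption).
  f_equal; fext; unfold advect; rewrite !pderiv_lin by assumption; unfold fadd, fscale; vring.
Qed.

Lemma Bop_add_l f1 f2 g : trig_poly f1 -> trig_poly f2 -> trig_poly g ->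
  Bop (fadd f1 f2) g = fadd (Bop f1 g) (Bop f2 g).
Proof.
  intros H1 H2 H3.
  replace (fadd f1 f2) with (fadd (fscale 1 f1) (fscale 1 f2)) by (fext; unfold fadd, fscale; vring).
  rewrite Bop_lin_l by assumption; fext; unfold fadd, fscale; vring.
Qed.

Lemma Bop_scale_l c f g : trig_poly f -> trig_poly g -> Bop (fscale c f) g = fscale c (Bop f g).
Proof.
  intros H1 H2.
  replace (fscale c f) with (fadd (fscale c f) (fscale 0 f)) by (fext; unfold fadd, fscale; vring).
  rewrite Bop_lin_l by assumption; fext; unfold fadd, fscale; vring.
Qed.

(** * Combinations of [B] producing a single mode *)

Definition interact (s : R) (J K a b : V3) : V3 :=
  vadd (vscale (vdot a K) b) (vscale (s * vdot b J) a).

Ltac Bop_combination j k a b :=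
  rewrite !Bop_modes; apply functional_extensionality; let x := fresh "x" in intro x;
  unfold fadd, fscale, bplus_cos, bplus_sin, bminus_cos, bminus_sin, interact;
  repeat rewrite ?leray_symbol_add, ?leray_symbol_scale; rewrite ?leray_symbol_vzero;
  generalize (leray_symbol (zadd j k) a) (leray_symbol (zadd j k) b)
    (leray_symbol (zsub j k) a) (leray_symbol (zsub j k) b);
  let LA := fresh in let LB := fresh in let MA := fresh in let MB := fresh in
  intros LA LB MA MB; unfold mode;
  generalize (cos (vdot (zR (zadd j k)) x)) (sin (vdot (zR (zadd j k)) x))
    (cos (vdot (zR (zsub j k)) x)) (sin (vdot (zR (zsub j k)) x));
  let c1 := fresh in let s1 := fresh in let c2 := fresh in let s2 := fresh in
  intros c1 s1 c2 s2; clear x; unfold vdot;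
  destruct j as [j1 j2 j3], k as [k1 k2 k3]; unfold zR; cbn [z1 z2 z3];
  apply V3_eq; cbn [v1 v2 v3 vadd vscale vzero]; field.

Lemma Bop_sin_plus j k a b :
  fadd (Bop (mode j vzero a) (mode k vzero b)) (fscale (-1) (Bop (mode j a vzero) (mode k b vzero)))
  = mode (zadd j k) vzero (leray_symbol (zadd j k) (interact 1 (zR j) (zR k) a b)).
Proof. Bop_combination j k a b. Qed.

Lemma Bop_sin_minus j k a b :
  fadd (Bop (mode j vzero a) (mode k vzero b)) (Bop (mode j a vzero) (mode k b vzero))
  = mode (zsub j k) vzero (leray_symbol (zsub j k) (interact (-1) (zR j) (zR k) a b)).
Proof. Bop_combination j k a b. Qed.

Lemma Bop_cos_plus j k a b :
  fadd (Bop (mode j a vzero) (mode k vzero b)) (Bop (mode j vzero a) (mode k b vzero))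
  = mode (zadd j k) (leray_symbol (zadd j k) (interact 1 (zR j) (zR k) a b)) vzero.
Proof. Bop_combination j k a b. Qed.

Lemma Bop_cos_minus j k a b :
  fadd (Bop (mode j a vzero) (mode k vzero b)) (fscale (-1) (Bop (mode j vzero a) (mode k b vzero)))
  = mode (zsub j k) (leray_symbol (zsub j k) (interact (-1) (zR j) (zR k) a b)) vzero.
Proof. Bop_combination j k a b. Qed.

(** * The mode (1,1,1) from the coordinate modes *)

Definition kx : Z3 := mkZ3 1 0 0.
Definition ky : Z3 := mkZ3 0 1 0.
Definition kz : Z3 := mkZ3 0 0 1.
Definition kxy : Z3 := mkZ3 1 1 0.
Definition kxyz : Z3 := mkZ3 1 1 1.

Lemma Fk_trig_poly k f : Fk k f -> trig_poly f.
Proof.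
  unfold Fk; destruct (zeqb k zzero); [intros ->; exists nil; reflexivity|].
  intros (A & B & _ & _ & ->); apply trig_poly_mode.
Qed.

Lemma Fcoord_trig_poly f : Fcoord f -> trig_poly f.
Proof. intros [H | [H | H]]; exact (Fk_trig_poly _ _ H). Qed.

Lemma Fcoord_x A B : v1 A = 0 -> v1 B = 0 -> Fcoord (mode kx A B).
Proof.
  intros HA HB; left; apply Fk_mode; [discriminate| |];
    unfold vdot, kx, zR; simpl; [rewrite HA | rewrite HB]; ring.
Qed.

Lemma Fcoord_y A B : v2 A = 0 -> v2 B = 0 -> Fcoord (mode ky A B).
Proof.
  intros HA HB; right; left; apply Fk_mode; [discriminate| |];
    unfold vdot, ky, zR; simpl; [rewrite HA | rewrite HB]; ring.
Qed.

Lemma Fcoord_z A B : v3 A = 0 -> v3 B = 0 -> Fcoord (mode kz A B).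
Proof.
  intros HA HB; right; right; apply Fk_mode; [discriminate| |];
    unfold vdot, kz, zR; simpl; [rewrite HA | rewrite HB]; ring.
Qed.

Ltac trig_poly_auto :=
  repeat first [ assumption | apply trig_poly_fscale | apply trig_poly_Bop | apply trig_poly_mode ].

Lemma BBset_span e e' e'' : Fcoord e -> Fcoord e' -> Fcoord e'' -> span BBset (Bop (Bop e e') e'').
Proof. intros; apply span_in; exists e, e', e''; auto. Qed.

Lemma leray_symbol_kxy_ev3 : leray_symbol kxy (interact 1 (zR kx) (zR ky) ev3 ev1) = ev3.
Proof. unfold leray_symbol, interact, vdot, zR, kxy, kx, ky, ev1, ev3; apply V3_eq; simpl; field. Qed.

Lemma BBset_span_kxy g : Fcoord g ->
  span BBset (Bop (mode kxy ev3 vzero) g) /\ span BBset (Bop (mode kxy vzero ev3) g).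
Proof.
  intro Hg; pose proof (Fcoord_trig_poly g Hg) as Tg.
  assert (Fx3 : Fcoord (mode kx ev3 vzero) /\ Fcoord (mode kx vzero ev3))
    by (split; apply Fcoord_x; reflexivity).
  assert (Fy1 : Fcoord (mode ky ev1 vzero) /\ Fcoord (mode ky vzero ev1))
    by (split; apply Fcoord_y; reflexivity).
  split.
  - rewrite <- leray_symbol_kxy_ev3 at 1; change kxy with (zadd kx ky).
    rewrite <- Bop_cos_plus, Bop_add_l by trig_poly_auto.
    apply span_add; apply BBset_span; tauto.
  - rewrite <- leray_symbol_kxy_ev3 at 1; change kxy with (zadd kx ky).
    rewrite <- Bop_sin_plus, Bop_add_l, Bop_scale_l by trig_poly_auto.
    apply span_add; [|apply span_scale]; apply BBset_span; tauto.
Qed.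

(** Chosen so that [interact 1 (1,1,0) (0,0,1) e3 (kz_coef U)] is [U] plus a multiple of
    [(1,1,1)]. *)
Definition kz_coef (U : V3) : V3 := mkV3 (2 * v3 U + v1 U) (v3 U - v1 U) 0.

Lemma leray_symbol_kxyz U : vdot U (zR kxyz) = 0 ->
  leray_symbol kxyz (interact 1 (zR kxy) (zR kz) ev3 (kz_coef U)) = U.
Proof.
  destruct U as [p q r]; unfold vdot, zR, kxyz; simpl; intro HU.
  assert (q = - p - r) by lra; subst q.
  unfold leray_symbol, interact, kz_coef, vdot, zR, kxy, kz, ev3; apply V3_eq; simpl; field.
Qed.

Lemma Fk_kxyz_span : subset (Fk kxyz) (span BBset).
Proof.
  intros f Hf; destruct (Fk_inv kxyz f ltac:(discriminate) Hf) as (U & V & HU & HV & ->).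
  replace (mode kxyz U V) with (fadd (mode kxyz U vzero) (mode kxyz vzero V))
    by (fext; unfold fadd, mode; vring).
  assert (Fz : forall W, Fcoord (mode kz (kz_coef W) vzero) /\ Fcoord (mode kz vzero (kz_coef W)))
    by (split; apply Fcoord_z; reflexivity).
  apply span_add.
  - rewrite <- (leray_symbol_kxyz U HU) at 1; change kxyz with (zadd kxy kz).
    rewrite <- Bop_cos_plus; apply span_add; apply BBset_span_kxy, Fz.
  - rewrite <- (leray_symbol_kxyz V HV) at 1; change kxyz with (zadd kxy kz).
    rewrite <- Bop_sin_plus; apply span_add; [|apply span_scale]; apply BBset_span_kxy, Fz.
Qed.

(** * Surjectivity onto [F_(j + k)] and [F_(j - k)] *)

Definition cross (a b : V3) : V3 :=
  mkV3 (v2 a * v3 b - v3 a * v2 b) (v3 a * v1 b - v1 a * v3 b) (v1 a * v2 b - v2 a * v1 b).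

Definition proj_perp (m v : V3) : V3 := vadd v (vscale (- (vdot v m / vdot m m)) m).

Lemma leray_symbol_proj_perp c v : zeqb c zzero = false -> leray_symbol c v = proj_perp (zR c) v.
Proof. intro H; unfold leray_symbol; rewrite H; reflexivity. Qed.

Ltac vexpand := unfold proj_perp, interact, cross, vdot, vadd, vscale, vzero in *; cbn [v1 v2 v3] in *.

Lemma orthogonal_basis_eq0 m n w R : vdot m n = 0 -> vdot n w = 0 -> vdot w m = 0 ->
  vdot m m <> 0 -> vdot n n <> 0 -> vdot w w <> 0 ->
  vdot R m = 0 -> vdot R n = 0 -> vdot R w = 0 -> R = vzero.
Proof.
  intros Hmn Hnw Hwm Hm Hn Hw H1 H2 H3.
  set (D := vdot m (cross n w)).
  assert (HD : D * D = vdot m m * vdot n n * vdot w w).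
  { assert (E : D * D = vdot m m * vdot n n * vdot w w + 2 * vdot m n * vdot n w * vdot w m
       - vdot m m * vdot n w * vdot n w - vdot n n * vdot w m * vdot w m
       - vdot w w * vdot m n * vdot m n)
      by (unfold D; destruct m as [m1 m2 m3], n as [n1 n2 n3], w as [w1 w2 w3]; vexpand; ring).
    rewrite E, Hmn, Hnw, Hwm; ring. }
  assert (HD0 : D <> 0).
  { intro h; rewrite h, Rmult_0_l in HD; symmetry in HD; revert HD.
    repeat apply Rmult_integral_contrapositive_currified; assumption. }
  assert (ER : vscale D R = vadd (vscale (vdot R m) (cross n w))
                                 (vadd (vscale (vdot R n) (cross w m)) (vscale (vdot R w) (cross m n))))
    by (unfold D; destruct m as [m1 m2 m3], n as [n1 n2 n3], w as [w1 w2 w3], R as [r1 r2 r3];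
        vexpand; apply V3_eq; cbn [v1 v2 v3]; ring).
  rewrite H1, H2, H3 in ER; apply (vscale_eq0 D R HD0); rewrite ER; vring.
Qed.

Lemma orthogonal_expansion m n w U : vdot m n = 0 -> vdot n w = 0 -> vdot w m = 0 ->
  vdot m m <> 0 -> vdot n n <> 0 -> vdot w w <> 0 -> vdot U m = 0 ->
  U = vadd (vscale (vdot U n / vdot n n) n) (vscale (vdot U w / vdot w w) w).
Proof.
  intros Hmn Hnw Hwm Hm Hn Hw HU.
  set (R := vadd U (vscale (-1) (vadd (vscale (vdot U n / vdot n n) n) (vscale (vdot U w / vdot w w) w)))).
  assert (HR : R = vzero).
  { apply (orthogonal_basis_eq0 m n w R); auto; unfold R; repeat rewrite ?vdot_addl, ?vdot_scalel.
    - rewrite HU, (vdot_sym n m), Hmn, Hwm; ring.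
    - rewrite (vdot_sym w n), Hnw; field; auto.
    - rewrite Hnw; field; auto. }
  unfold R in HR; destruct U as [u1 u2 u3];
    destruct (vadd (vscale (vdot _ n / vdot n n) n) (vscale (vdot _ w / vdot w w) w)) as [x1 x2 x3].
  vexpand; injection HR; intros; apply V3_eq; cbn [v1 v2 v3]; lra.
Qed.

Lemma interact_scale_l s J K c a b : interact s J K (vscale c a) b = vscale c (interact s J K a b).
Proof. vexpand; apply V3_eq; cbn [v1 v2 v3]; ring. Qed.

Lemma proj_perp_scale m c v : proj_perp m (vscale c v) = vscale c (proj_perp m v).
Proof. vexpand; apply V3_eq; cbn [v1 v2 v3]; unfold Rdiv; ring. Qed.

Lemma proj_perp_id m v : vdot v m = 0 -> proj_perp m v = v.
Proof. intro H; unfold proj_perp; rewrite H; unfold Rdiv; rewrite Rmult_0_l, Ropp_0; vring. Qed.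

Lemma proj_perp_perp m v : vdot m m <> 0 -> vdot (proj_perp m v) m = 0.
Proof. intro Hm; unfold proj_perp; rewrite vdot_addl, vdot_scalel; field; exact Hm. Qed.

Lemma proj_perp_norm2 m v : vdot m m <> 0 ->
  vdot (proj_perp m v) (proj_perp m v) * vdot m m = vdot v v * vdot m m - vdot v m * vdot v m.
Proof.
  destruct m as [m1 m2 m3], v as [x1 x2 x3]; vexpand; intro Hm; field; exact Hm.
Qed.

Lemma cross_perp_l a b : vdot (cross a b) a = 0.
Proof. destruct a as [a1 a2 a3], b as [b1 b2 b3]; vexpand; ring. Qed.

Lemma cross_perp_r a b : vdot (cross a b) b = 0.
Proof. destruct a as [a1 a2 a3], b as [b1 b2 b3]; vexpand; ring. Qed.

Lemma vdot_vadd_scale_r a b c x : vdot x (vadd a (vscale c b)) = vdot x a + c * vdot x b.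
Proof. vexpand; ring. Qed.

Lemma interact_cross_n s J K :
  interact s J K (cross J K) (cross K (cross J K)) = vscale (s * vdot (cross J K) (cross J K)) (cross J K).
Proof. destruct J as [j1 j2 j3], K as [k1 k2 k3]; vexpand; apply V3_eq; cbn [v1 v2 v3]; ring. Qed.

Lemma interact_cross_Jn s J K : s = 1 \/ s = -1 ->
  interact s J K (cross J (cross J K)) (cross K (cross J K))
  = vscale (s * vdot (cross J K) (cross J K)) (cross (vadd J (vscale (- s) K)) (cross J K)).
Proof.
  intros [-> | ->]; destruct J as [j1 j2 j3], K as [k1 k2 k3]; vexpand; apply V3_eq; cbn [v1 v2 v3];
    ring.
Qed.

Lemma cross_norm2_identity s J K : s = 1 \/ s = -1 ->
  let m := vadd J (vscale s K) in let v := cross (vadd J (vscale (- s) K)) (cross J K) in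
  vdot v v * vdot m m - vdot v m * vdot v m
  = vdot (cross J K) (cross J K) * (vdot J J - vdot K K) * (vdot J J - vdot K K).
Proof. intros [-> | ->]; destruct J as [j1 j2 j3], K as [k1 k2 k3]; vexpand; ring. Qed.


(** For [J], [K] independent with [|J| <> |K|] and [m = J + s K], the images of [n = J x K]
    and of the projection [w] of [(J - s K) x n] form an orthogonal basis of [m^perp]. *)
Lemma perp_decomposition s J K U : s = 1 \/ s = -1 ->
  vdot (cross J K) (cross J K) <> 0 -> vdot J J <> vdot K K ->
  vdot (vadd J (vscale s K)) (vadd J (vscale s K)) <> 0 ->
  vdot U (vadd J (vscale s K)) = 0 ->
  exists a1 b1 a2 b2, vdot a1 J = 0 /\ vdot b1 K = 0 /\ vdot a2 J = 0 /\ vdot b2 K = 0 /\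
    U = vadd (proj_perp (vadd J (vscale s K)) (interact s J K a1 b1))
             (proj_perp (vadd J (vscale s K)) (interact s J K a2 b2)).
Proof.
  intros Hs Hn HJK Hm HU.
  pose proof (cross_norm2_identity s J K Hs) as Ev; cbv zeta in Ev.
  set (m := vadd J (vscale s K)) in *; set (n := cross J K) in *.
  set (v := cross (vadd J (vscale (- s) K)) n) in *; set (w := proj_perp m v).
  assert (Hnm : vdot n m = 0)
    by (unfold n, m; rewrite vdot_vadd_scale_r, cross_perp_l, cross_perp_r; ring).
  assert (Hwm : vdot w m = 0) by (apply proj_perp_perp, Hm).
  assert (Hnw : vdot n w = 0).
  { rewrite vdot_sym; unfold w, proj_perp.
    rewrite vdot_addl, vdot_scalel, (vdot_sym m n), Hnm; unfold v; rewrite cross_perp_r; ring. }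
  assert (Hw : vdot w w <> 0).
  { intro h; pose proof (proj_perp_norm2 m v Hm) as E; fold w in E.
    rewrite Ev, h, Rmult_0_l in E; symmetry in E; revert E.
    repeat apply Rmult_integral_contrapositive_currified; auto; lra. }
  set (al := vdot U n / vdot n n); set (be := vdot U w / vdot w w).
  exists (vscale (s * al / vdot n n) n), (cross K n),
    (vscale (s * be / vdot n n) (cross J n)), (cross K n).
  rewrite !vdot_scalel; unfold n at 1 3; rewrite !cross_perp_l, !Rmult_0_r.
  do 4 (split; [reflexivity|]).
  rewrite !interact_scale_l, interact_cross_n, interact_cross_Jn by exact Hs; fold n v.
  rewrite !proj_perp_scale, proj_perp_id by exact Hnm; fold w.
  rewrite (orthogonal_expansion m n w U) at 1 by (auto; rewrite vdot_sym; assumption).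
  fold al be; destruct Hs as [-> | ->]; apply V3_eq; simpl; field; auto.
Qed.

Lemma Bset_span j k A B C D : j <> zzero -> k <> zzero ->
  vdot A (zR j) = 0 -> vdot B (zR j) = 0 -> vdot C (zR k) = 0 -> vdot D (zR k) = 0 ->
  span (Bset j k) (Bop (mode j A B) (mode k C D)).
Proof. intros; apply span_in; exists (mode j A B), (mode k C D); auto using Fk_mode. Qed.

Lemma norm2_cross_neq0 j k : j <> zzero -> lin_indep2 j k ->
  vdot (cross (zR j) (zR k)) (cross (zR j) (zR k)) <> 0.
Proof.
  intros Hj Hli h; apply vdot_self_eq0 in h.
  assert (E : vadd (vscale (vdot (zR j) (zR k)) (zR j)) (vscale (- vdot (zR j) (zR j)) (zR k)) = vzero).
  { transitivity (cross (zR j) (cross (zR j) (zR k))); [|rewrite h; vexpand; vring].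
    generalize (zR j) (zR k); intros [a1 a2 a3] [b1 b2 b3]; vexpand; apply V3_eq; cbn [v1 v2 v3]; ring. }
  destruct (Hli _ _ E) as [_ H]; apply (zR_norm2_neq0 j (zeqb_zzero j Hj)); lra.
Qed.

Lemma norm2_comb_neq0 j k s : lin_indep2 j k ->
  vdot (vadd (zR j) (vscale s (zR k))) (vadd (zR j) (vscale s (zR k))) <> 0.
Proof.
  intros Hli h; apply vdot_self_eq0 in h.
  assert (E : vadd (vscale 1 (zR j)) (vscale s (zR k)) = vzero) by (rewrite <- h; vring).
  destruct (Hli _ _ E); lra.
Qed.

Lemma zcomb_neq_zzero j k s M : lin_indep2 j k ->
  zR M = vadd (zR j) (vscale s (zR k)) -> M <> zzero.
Proof.
  intros Hli E ->; apply (norm2_comb_neq0 j k s Hli); rewrite <- E; exact (vdot0l _).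
Qed.

Lemma mode_vadd_cos M P Q : mode M (vadd P Q) vzero = fadd (mode M P vzero) (mode M Q vzero).
Proof. fext; unfold fadd, mode; vring. Qed.

Lemma mode_vadd_sin M P Q : mode M vzero (vadd P Q) = fadd (mode M vzero P) (mode M vzero Q).
Proof. fext; unfold fadd, mode; vring. Qed.

Section Surjectivity.

Variables (j k : Z3).
Hypotheses (Hj : j <> zzero) (Hk : k <> zzero) (Hli : lin_indep2 j k)
  (Hnorm : vdot (zR j) (zR j) <> vdot (zR k) (zR k)).

Lemma Bset_span_mode (M : Z3) (s : R) : s = 1 \/ s = -1 ->
  zR M = vadd (zR j) (vscale s (zR k)) ->
  (forall a b, vdot a (zR j) = 0 -> vdot b (zR k) = 0 ->
     span (Bset j k) (mode M (leray_symbol M (interact s (zR j) (zR k) a b)) vzero)) ->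
  (forall a b, vdot a (zR j) = 0 -> vdot b (zR k) = 0 ->
     span (Bset j k) (mode M vzero (leray_symbol M (interact s (zR j) (zR k) a b)))) ->
  forall U V, vdot U (zR M) = 0 -> vdot V (zR M) = 0 -> span (Bset j k) (mode M U V).
Proof.
  intros Hs HM Hcos Hsin U V HU HV.
  assert (HM0 : zeqb M zzero = false) by (apply zeqb_zzero, (zcomb_neq_zzero j k s); assumption).
  assert (Hdec : forall W, vdot W (zR M) = 0 -> exists a1 b1 a2 b2,
    vdot a1 (zR j) = 0 /\ vdot b1 (zR k) = 0 /\ vdot a2 (zR j) = 0 /\ vdot b2 (zR k) = 0 /\
    W = vadd (leray_symbol M (interact s (zR j) (zR k) a1 b1))
             (leray_symbol M (interact s (zR j) (zR k) a2 b2))).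
  { intros W HW; rewrite HM in HW.
    destruct (perp_decomposition s (zR j) (zR k) W Hs (norm2_cross_neq0 j k Hj Hli) Hnorm
                (norm2_comb_neq0 j k s Hli) HW) as (a1 & b1 & a2 & b2 & H1 & H2 & H3 & H4 & E).
    exists a1, b1, a2, b2; do 4 (split; [assumption|]).
    rewrite !leray_symbol_proj_perp, HM by exact HM0; exact E. }
  replace (mode M U V) with (fadd (mode M U vzero) (mode M vzero V)) by (fext; unfold fadd, mode; vring).
  destruct (Hdec U HU) as (a1 & b1 & a2 & b2 & Ha1 & Hb1 & Ha2 & Hb2 & ->).
  destruct (Hdec V HV) as (a3 & b3 & a4 & b4 & Ha3 & Hb3 & Ha4 & Hb4 & ->).
  rewrite mode_vadd_cos, mode_vadd_sin.
  apply span_add; apply span_add; [apply Hcos | apply Hcos | apply Hsin | apply Hsin]; assumption.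
Qed.

Ltac Bset_pair :=
  apply span_add; try apply span_scale; apply Bset_span; auto using vdot0l.

Lemma Bset_span_zadd U V : vdot U (zR (zadd j k)) = 0 -> vdot V (zR (zadd j k)) = 0 ->
  span (Bset j k) (mode (zadd j k) U V).
Proof.
  apply (Bset_span_mode (zadd j k) 1); [left; reflexivity | rewrite zR_add; vring | |];
    intros a b Ha Hb; [rewrite <- Bop_cos_plus | rewrite <- Bop_sin_plus]; Bset_pair.
Qed.

Lemma Bset_span_zsub U V : vdot U (zR (zsub j k)) = 0 -> vdot V (zR (zsub j k)) = 0 ->
  span (Bset j k) (mode (zsub j k) U V).
Proof.
  apply (Bset_span_mode (zsub j k) (-1)); [right; reflexivity | apply zR_sub | |];
    intros a b Ha Hb; [rewrite <- Bop_cos_minus | rewrite <- Bop_sin_minus]; Bset_pair.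
Qed.

Lemma Fk_pm_span_Bset : subset (span (set_union (Fk (zsub j k)) (Fk (zadd j k)))) (span (Bset j k)).
Proof.
  apply span_subset; intros f [Hf | Hf].
  - apply Fk_inv in Hf as (U & V & HU & HV & ->); [apply Bset_span_zsub; assumption|].
    apply (zcomb_neq_zzero j k (-1)); [exact Hli | apply zR_sub].
  - apply Fk_inv in Hf as (U & V & HU & HV & ->); [apply Bset_span_zadd; assumption|].
    apply (zcomb_neq_zzero j k 1); [exact Hli | rewrite zR_add; vring].
Qed.

End Surjectivity.

Lemma vdot_self_neq a b : vnorm a <> vnorm b -> vdot a a <> vdot b b.
Proof. intros H E; apply H; unfold vnorm; rewrite E; reflexivity. Qed.

Theorem lemma5p21 :
  (forall k : Z3, k <> zzero ->
     forall e e' : Field, Fk k e -> Fk k e' -> Bop e e' = fzero)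
  /\
  (forall j k : Z3, j <> zzero -> k <> zzero ->
     subset (span (Bset j k)) (span (set_union (Fk (zsub j k)) (Fk (zadd j k))))
     /\ (lin_indep2 j k -> vnorm (zR j) <> vnorm (zR k) ->
         subset (span (set_union (Fk (zsub j k)) (Fk (zadd j k)))) (span (Bset j k))))
  /\
  subset (Fk (mkZ3 1 1 1)) (span BBset).
Proof.
  split; [exact Bop_Fk_same | split; [|exact Fk_kxyz_span]].
  intros j k Hj Hk; split; [exact (Bset_span_Fk_pm j k Hj Hk)|].
  intros Hli Hnorm; apply Fk_pm_span_Bset; auto using vdot_self_neq.
Qed.
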